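(* Let $G$ and $H$ be connected bipartite circulant graphs on $2n$ and $2m$ vertices respectively, where $\gcd(n,m) = 1$. Then $G \otimes H$ is a circulant graph.
   Context: Graphs have no multiple edges but may have loops. The tensor product $G \otimes H$ of graphs $G$ and $H$ has vertex set $V(G)\times V(H)$, with $(g,h)$ adjacent to $(g',h')$ if and only if $g$ is adjacent to $g'$ in $G$ and $h$ is adjacent to $h'$ in $H$. For an integer $N\ge 1$ and a set $S$ of integers, the circulant graph $C_NS$ has vertex set $\{0,\dots,N-1\}$, with $i$ adjacent to $j$ iff $i-j \equiv \pm s \pmod N$ for some $s\in S$; a graph is circulant if it is isomorphic to some $C_NS$ (this includes disconnected graphs); equivalently, if it has an automorphism that permutes all its vertices in a single cycle. *)

From mathcomp Require Import all_boot all_order all_algebra.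
Set Implicit Arguments. Unset Strict Implicit. Unset Printing Implicit Defensive.
Import GRing.Theory Num.Theory.

(* A graph (no multiple edges, loops allowed) is a symmetric relation
   on a finite vertex type. *)
Definition is_graph (T : finType) (e : rel T) : Prop := symmetric e.

Definition circ_adj (N : nat) (S : pred int) (i j : nat) : Prop :=
  exists s : int, S s /\
    (((i%:Z - j%:Z) = s %[mod N%:Z])%Z \/ ((i%:Z - j%:Z) = - s %[mod N%:Z])%Z).

Definition circulant (T : finType) (e : rel T) : Prop :=
  exists (N : nat) (S : pred int) (phi : T -> 'I_N),
    bijective phi /\ forall x y, e x y <-> @circ_adj N S (phi x) (phi y).

Definition gconnected (T : finType) (e : rel T) : Prop :=
  forall x y : T, connect e x y.

Definition bipartite (T : finType) (e : rel T) : Prop :=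
  exists A : {set T}, forall x y, e x y -> (x \in A) != (y \in A).

Definition tensor (T U : finType) (eG : rel T) (eH : rel U) : rel (T * U) :=
  fun p q => eG p.1 q.1 && eH p.2 q.2.

(* A connected bipartite circulant graph on 2n vertices is, after labelling
   its vertices by Z/2n, the Cayley graph of a symmetric connection set D of
   odd residues: an even connection would, together with any odd one
   (which exists by connectedness), produce an odd cycle.  Map vertex k of
   C_{4nm} to (floor(k/2) mod 2n, ceil(k/2) mod 2m).  Since gcd(n, m) = 1 this
   is a bijection onto V(G) x V(H), and since all connections are odd, k and
   k' are adjacent in G (x) H exactly when k - k' = 2d with d in D_G and in
   D_H.  Hence G (x) H is the circulant graph on 4nm vertices with connection
   set 2(D_G ∩ D_H). *)

From mathcomp Require Import all_boot all_order all_algebra zify.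
Import GRing.Theory Num.Theory.

Set Implicit Arguments.
Unset Strict Implicit.
Unset Printing Implicit Defensive.

Local Open Scope ring_scope.

Lemma eqz_modP (d z w : int) : (z = w %[mod d])%Z <-> (d %| z - w)%Z.
Proof. by rewrite -eqz_mod_dvd; split=> [->|/eqP]. Qed.

Lemma modzB (d z w : int) : ((z %% d)%Z - (w %% d)%Z = z - w %[mod d])%Z.
Proof. by rewrite modzDml -modzDmr modzNm modzDmr. Qed.

Lemma circ_adj_eqmod (N : nat) (S : pred int) (i j i' j' : nat) :
  (i%:Z - j%:Z = i'%:Z - j'%:Z %[mod N])%Z ->
  circ_adj N S i j <-> circ_adj N S i' j'.
Proof. by rewrite /circ_adj => ->. Qed.

Lemma circ_adjE (N : nat) (S : pred int) (i j : nat) :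
  (forall z w, (N %| z - w)%Z -> S z = S w) -> (forall z, S (- z) = S z) ->
  circ_adj N S i j <-> S (i%:Z - j%:Z).
Proof.
move=> S_mod S_opp; split=> [[s [Ss [/eqz_modP ij_s | /eqz_modP ij_s]]] | Sij].
- by rewrite (S_mod _ _ ij_s).
- by rewrite (S_mod _ _ ij_s) S_opp.
- by exists (i%:Z - j%:Z); split=> //; left.
Qed.

Lemma circulant_card0 (T : finType) (e : rel T) : #|T| = 0%N -> circulant e.
Proof.
move=> T0; exists #|T|, pred0, enum_rank; split; first exact: enum_rank_bij.
by move=> x; have := card0_eq T0 x; rewrite inE.
Qed.

Lemma connect_edge_change (T : finType) (e : rel T) (a : pred T) x y :
  connect e x y -> a x != a y -> exists u v, e u v /\ a u != a v.
Proof.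
move=> cxy axy; case: (boolP [exists u, exists v, e u v && (a u != a v)]).
  by case/existsP=> u /existsP[v /andP[euv auv]]; exists u, v.
rewrite negb_exists => /forallP a_closed; case/negP: axy.
apply/eqP; apply: (closed_connect _ cxy) => u v euv; apply/eqP.
by have := a_closed u; rewrite negb_exists => /forallP/(_ v); rewrite euv negbK.
Qed.

Lemma half_uphalf_inj (n m k k' : nat) :
  coprime n m -> (k < 4 * (n * m))%N -> (k' < 4 * (n * m))%N ->
  ((2 * n)%N %| k./2%:Z - k'./2%:Z)%Z -> ((2 * m)%N %| (uphalf k)%:Z - (uphalf k')%:Z)%Z ->
  k = k'.
Proof.
rewrite !uphalfE -!divn2 => nm_coprime lt_k lt_k' /dvdzP[a ha] /dvdzP[b hb].
have same_parity : (k %% 2 = k' %% 2)%N by lia.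
have /dvdzP[c hc] : (m %| a)%Z.
  have mn_coprime : coprimez m n by rewrite coprimezE /= coprime_sym.
  by rewrite -(Gauss_dvdzr _ mn_coprime); apply/dvdzP; exists b; lia.
have c0 : c = 0 by nia.
lia.
Qed.

Record odd_circulant_labelling (T : finType) (e : rel T) (N : nat)
    (v : int -> T) (D : pred int) : Prop := OddCirculantLabelling {
  lab_eqmod : forall z w, v z = v w <-> (N %| z - w)%Z;
  lab_edge : forall z w, e (v z) (v w) = D (z - w);
  lab_opp : forall z, D (- z) = D z;
  lab_odd : forall z, D z -> ~~ (2 %| z)%Z
}.

Lemma lab_conn_eqmod (T : finType) (e : rel T) N v D z w :
  @odd_circulant_labelling T e N v D -> (N %| z - w)%Z -> D z = D w.
Proof.
by move=> lab /(lab_eqmod lab) vzw; rewrite -[z]subr0 -[w]subr0 -!(lab_edge lab) vzw.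
Qed.

Section CirculantLabelling.

Variables (T : finType) (e : rel T) (N : nat) (S : pred int).
Variables (phi : T -> 'I_N) (g : 'I_N -> T).
Hypotheses (N_gt0 : (0 < N)%N) (phiK : cancel phi g) (gK : cancel g phi).
Hypothesis e_circ : forall x y, e x y <-> circ_adj N S (phi x) (phi y).

Lemma modz_ord (z : int) : (`|(z %% N)%Z|%N < N)%N.
Proof. lia. Qed.

Definition ord_modz (z : int) : 'I_N := Ordinal (modz_ord z).

Lemma ord_modzE z : (ord_modz z : int) = (z %% N)%Z.
Proof. rewrite /=; lia. Qed.

Definition circ_vert (z : int) : T := g (ord_modz z).

Lemma phi_circ_vert z : (phi (circ_vert z) : int) = (z %% N)%Z.
Proof. by rewrite gK ord_modzE. Qed.

Lemma circ_vert_phi x : circ_vert (phi x) = x.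
Proof.
rewrite /circ_vert -[RHS]phiK; congr g; apply: val_inj => /=.
by rewrite modz_small //= ltz_nat ltn_ord.
Qed.

Lemma circ_vert_eqmod z w : circ_vert z = circ_vert w <-> (N %| z - w)%Z.
Proof.
rewrite -eqz_modP -!ord_modzE; split=> [/(can_inj gK) -> // | [zw]].
by rewrite /circ_vert; congr g; apply: val_inj.
Qed.

Definition circ_conn (d : int) : bool := e (circ_vert d) (circ_vert 0).

Lemma circ_edge_vert z w : e (circ_vert z) (circ_vert w) = circ_conn (z - w).
Proof.
apply/idP/idP => /e_circ adj; apply/e_circ; apply: (iffLR (circ_adj_eqmod _ _) adj);
  by rewrite !phi_circ_vert !modzB subr0.
Qed.

Hypothesis e_sym : symmetric e.

Lemma circ_conn_opp d : circ_conn (- d) = circ_conn d.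
Proof. by rewrite -sub0r -circ_edge_vert e_sym. Qed.

Lemma circ_conn_abs d : circ_conn `|d|%N = circ_conn d.
Proof.
have [->|->] : `|d|%N = d :> int \/ `|d|%N = - d :> int by lia.
  by []. exact: circ_conn_opp.
Qed.

Hypotheses (N_gt1 : (1 < N)%N) (e_conn : gconnected e).
Variable A : {set T}.
Hypothesis A_bip : forall x y, e x y -> (x \in A) != (y \in A).

Lemma circ_conn_odd d : circ_conn d -> ~~ (2 %| d)%Z.
Proof.
move=> dE; apply/negP => d_even.
pose side z := circ_vert z \in A.
have side_step t z : circ_conn t -> side (z + t) = ~~ side z.
  move=> tE; have /A_bip : e (circ_vert (z + t)) (circ_vert z).
    by rewrite circ_edge_vert (addrC z) addrK.
  by rewrite /side; case: (_ \in A); case: (_ \in A).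
have side_iter t z (k : nat) : circ_conn t -> side (z + t * k) = side z (+) odd k.
  move=> tE; elim: k => [|k IH]; first by rewrite mulr0 addr0 addbF.
  have -> : z + t * k.+1 = z + t * k + t by lia.
  by rewrite side_step // IH addbN.
have [x [y [exy parity]]] :
    exists x y, e x y /\ (2 %| (phi x : int))%Z != (2 %| (phi y : int))%Z.
  apply: (connect_edge_change (a := fun x => (2 %| (phi x : int))%Z)
                              (e_conn (circ_vert 0) (circ_vert 1))).
  by rewrite !phi_circ_vert mod0z modz_small ?ltz_nat.
have tE : circ_conn ((phi x : int) - (phi y : int)) by rewrite -circ_edge_vert !circ_vert_phi.
have odd_abs z : odd `|z|%N = ~~ (2 %| z)%Z.
  by rewrite dvdzE dvdn2 negbK.
have := side_iter `|(phi x : int) - (phi y : int)|%N 0 `|d|%N; rewrite circ_conn_abs => /(_ tE).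
have := side_iter `|d|%N 0 `|(phi x : int) - (phi y : int)|%N; rewrite circ_conn_abs => /(_ dE).
(* |d| steps of length |t| and |t| steps of length |d| reach the same vertex,
   switching sides an odd and an even number of times respectively. *)
rewrite mulrC => ->; rewrite !odd_abs d_even.
have -> : ~~ (2 %| (phi x : int) - (phi y : int))%Z by lia.
by case: (side _).
Qed.

Lemma circulant_odd_labelling : odd_circulant_labelling e N circ_vert circ_conn.
Proof. split; [exact: circ_vert_eqmod | exact: circ_edge_vert | exact: circ_conn_opp | exact: circ_conn_odd]. Qed.

End CirculantLabelling.

Section TensorProduct.

Variables (T U : finType) (eG : rel T) (eH : rel U) (n m : nat).
Variables (vG : int -> T) (vH : int -> U) (DG DH : pred int).
Hypotheses (cardT : #|T| = (2 * n)%N) (cardU : #|U| = (2 * m)%N).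
Hypothesis nm_coprime : coprime n m.
Hypotheses (labG : odd_circulant_labelling eG (2 * n) vG DG)
           (labH : odd_circulant_labelling eH (2 * m) vH DH).

Local Notation N := (4 * (n * m))%N.

Definition tensor_vert (k : 'I_N) : T * U := (vG k./2, vH (uphalf k)).

Definition tensor_conn : pred int :=
  fun x => [&& (2 %| x)%Z, DG (x %/ 2)%Z & DH (x %/ 2)%Z].

Lemma tensor_conn_eqmod x y : (N %| x - y)%Z -> tensor_conn x = tensor_conn y.
Proof.
move=> /dvdzP[c xy]; rewrite /tensor_conn.
have [x_even | x_odd] := boolP (2 %| x)%Z; last first.
  by have -> : (2 %| y)%Z = false by lia.
have -> : (2 %| y)%Z by lia.
rewrite (lab_conn_eqmod labG (w := (y %/ 2)%Z)); last by apply/dvdzP; exists (c * m); lia.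
by rewrite (lab_conn_eqmod labH (w := (y %/ 2)%Z)) //; apply/dvdzP; exists (c * n); lia.
Qed.

Lemma tensor_conn_opp x : tensor_conn (- x) = tensor_conn x.
Proof.
rewrite /tensor_conn; have -> : (2 %| - x)%Z = (2 %| x)%Z by lia.
have [x_even | //] := boolP (2 %| x)%Z.
have -> : ((- x) %/ 2)%Z = - (x %/ 2)%Z by lia.
by rewrite (lab_opp labG) (lab_opp labH).
Qed.

Lemma tensor_edge_vert (k k' : 'I_N) :
  tensor eG eH (tensor_vert k) (tensor_vert k') = tensor_conn (k%:Z - k'%:Z).
Proof.
rewrite /tensor /tensor_vert /tensor_conn /= (lab_edge labG) (lab_edge labH) !uphalfE -!divn2.
have [same_parity | diff_parity] := eqVneq (k %% 2)%N (k' %% 2)%N.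
  have -> : (k.+1 %/ 2)%N%:Z - (k'.+1 %/ 2)%N%:Z = (k %/ 2)%N%:Z - (k' %/ 2)%N%:Z by lia.
  have -> : (2 %| k%:Z - k'%:Z)%Z by lia.
  have -> : ((k%:Z - k'%:Z) %/ 2)%Z = (k %/ 2)%N%:Z - (k' %/ 2)%N%:Z by lia.
  by [].
have -> : (2 %| k%:Z - k'%:Z)%Z = false by lia.
apply/negbTE; apply/andP=> [[/(lab_odd labG) odd_half /(lab_odd labH) odd_uphalf]].
lia.
Qed.

Lemma tensor_vert_bij : bijective tensor_vert.
Proof.
apply: inj_card_bij; last by rewrite card_prod cardT cardU card_ord; lia.
move=> k k' [/(lab_eqmod labG) halves /(lab_eqmod labH) uphalves]; apply: val_inj.
exact: (half_uphalf_inj nm_coprime (ltn_ord k) (ltn_ord k') halves uphalves).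
Qed.

Lemma odd_labelling_tensor_circulant : circulant (tensor eG eH).
Proof.
have [tensor_ord tensor_vertK tensor_ordK] := tensor_vert_bij.
exists N, tensor_conn, tensor_ord; split; first by exists tensor_vert.
move=> x y; rewrite -{1}(tensor_ordK x) -{1}(tensor_ordK y) tensor_edge_vert.
rewrite circ_adjE //; [exact: tensor_conn_eqmod | exact: tensor_conn_opp].
Qed.

End TensorProduct.

Theorem theorem10 (T U : finType) (eG : rel T) (eH : rel U) (n m : nat) :
  is_graph eG -> is_graph eH ->
  #|T| = (2 * n)%N -> #|U| = (2 * m)%N -> coprime n m ->
  gconnected eG -> gconnected eH ->
  bipartite eG -> bipartite eH ->
  circulant eG -> circulant eH ->
  circulant (tensor eG eH).
Proof.
move=> symG symH cardT cardU nm_coprime conG conH [A bipA] [B bipB]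
  [NG [SG [phiG [[gG phiGK gGK] eG_circ]]]] [NH [SH [phiH [[gH phiHK gHK] eH_circ]]]].
have [n0 | n_gt0] := posnP n.
  by apply: circulant_card0; rewrite card_prod cardT n0.
have [m0 | m_gt0] := posnP m.
  by apply: circulant_card0; rewrite card_prod cardU m0 !muln0.
have NG_E : NG = (2 * n)%N by rewrite -cardT -(bij_eq_card (Bijective gGK phiGK)) card_ord.
have NH_E : NH = (2 * m)%N by rewrite -cardU -(bij_eq_card (Bijective gHK phiHK)) card_ord.
subst NG NH.
have NG_gt1 : (1 < 2 * n)%N by lia.
have NH_gt1 : (1 < 2 * m)%N by lia.
apply: (odd_labelling_tensor_circulant cardT cardU nm_coprime).
  exact: (circulant_odd_labelling (ltnW NG_gt1) phiGK gGK eG_circ symG NG_gt1 conG bipA).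
exact: (circulant_odd_labelling (ltnW NH_gt1) phiHK gHK eH_circ symH NH_gt1 conH bipB).
Qed.
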